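(* (1) If $\mathfrak G$ is a descriptive $\multimap$-frame, then $\hat\sigma\mathfrak G$ is a descriptive S4K-frame. (2) If $\mathfrak F$ is a descriptive S4K-frame, then $\hat\rho\mathfrak F$ is a descriptive $\multimap$-frame.
   Context: General $\multimap$-frame $(X,\preceq,\sqsubset,P)$: $\preceq$ partial order, $x\preceq y\sqsubset z\Rightarrow x\sqsubset z$, $P$ a family of $\preceq$-upsets containing $X,\emptyset$, closed under $\cap,\cup$, $a\Rightarrow b=\{x\mid\forall y(x\preceq y,y\in a\Rightarrow y\in b)\}$, $a\Rrightarrow b=\{x\mid\forall y(x\sqsubset y,y\in a\Rightarrow y\in b)\}$. It is descriptive if compact (any subfamily of $P\cup\{X\setminus a\mid a\in P\}$ with the finite intersection property has nonempty intersection), $\preceq$-refined ($x\not\preceq y\Rightarrow\exists a\in P$, $x\in a$, $y\notin a$) and $\sqsubset$-refined (not $x\sqsubset y\Rightarrow\exists a,b\in P$ with $x\in a\Rrightarrow b$, $y\in a$, $y\notin b$). General S4K-frame $(X,R_i,R_m,P)$: $R_i$ preorder, $R_m$ binary relation, $P$ Boolean subalgebra of $\mathcal P(X)$ closed under $[i]a=\{x\mid\forall y(xR_iy\Rightarrow y\in a)\}$ and $[m]a$ (likewise with $R_m$). It is descriptive if differentiated ($x\ne y\Rightarrow\exists a\in P$, $x\in a$, $y\notin a$), tight (for $R\in\{R_i,R_m\}$: $xRy$ iff for all $a\in P$, $x\in[R]a$ implies $y\in a$) and compact (every subfamily of $P$ with the finite intersection property has nonempty intersection). $\hat\sigma(X,\preceq,\sqsubset,P):=(X,\preceq,\sqsubset,\hat\sigma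 P)$ with $\hat\sigma P$ the Boolean algebra generated by $P$. For $\mathfrak F=(X,R_i,R_m,P)$: $xR_m^*z$ iff $\exists y(xR_iy\wedge yR_mz)$; $x\sim y$ iff $xR_iy\wedge yR_ix$; $[x]$ its class, $[X]$ the set of classes; $[x][R_i][y]$ iff $xR_iy$; $[x][R_m^*][y]$ iff $xR_m^*y'$ for some $y'\sim y$; $\hat\rho P:=\{\{[x]\mid x\in[i]b\}\mid b\in P\}$; $\hat\rho\mathfrak F:=([X],[R_i],[R_m^*],\hat\rho P)$. *)

From Stdlib Require Import List.
Import ListNotations.
Set Implicit Arguments.

Section Sets.
Variable X : Type.

Definition fullset : X -> Prop := fun _ => True.
Definition emptyset : X -> Prop := fun _ => False.
Definition setI (a b : X -> Prop) : X -> Prop := fun x => a x /\ b x.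
Definition setU (a b : X -> Prop) : X -> Prop := fun x => a x \/ b x.
Definition setC (a : X -> Prop) : X -> Prop := fun x => ~ a x.

Definition rimp (R : X -> X -> Prop) (a b : X -> Prop) : X -> Prop :=
  fun x => forall y, R x y -> a y -> b y.

Definition box (R : X -> X -> Prop) (a : X -> Prop) : X -> Prop :=
  fun x => forall y, R x y -> a y.

Definition upset (le : X -> X -> Prop) (a : X -> Prop) : Prop :=
  forall x y, le x y -> a x -> a y.

Definition FIP (F : (X -> Prop) -> Prop) : Prop :=
  forall l : list (X -> Prop), (forall a, In a l -> F a) ->
    exists x, forall a, In a l -> a x.

Definition has_nonempty_intersection (F : (X -> Prop) -> Prop) : Prop :=
  exists x, forall a, F a -> a x.

Definition general_mframe (le sq : X -> X -> Prop)
    (P : (X -> Prop) -> Prop) : Prop :=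
  (forall x, le x x) /\
  (forall x y z, le x y -> le y z -> le x z) /\
  (forall x y, le x y -> le y x -> x = y) /\
  (forall x y z, le x y -> sq y z -> sq x z) /\
  (forall a, P a -> upset le a) /\
  P fullset /\ P emptyset /\
  (forall a b, P a -> P b -> P (setI a b)) /\
  (forall a b, P a -> P b -> P (setU a b)) /\
  (forall a b, P a -> P b -> P (rimp le a b)) /\
  (forall a b, P a -> P b -> P (rimp sq a b)).

Definition mframe_compact (P : (X -> Prop) -> Prop) : Prop :=
  forall F : (X -> Prop) -> Prop,
    (forall c, F c -> P c \/ exists a, P a /\ c = setC a) ->
    FIP F -> has_nonempty_intersection F.

Definition descriptive_mframe (le sq : X -> X -> Prop)
    (P : (X -> Prop) -> Prop) : Prop :=
  general_mframe le sq P /\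
  mframe_compact P /\
  (forall x y, ~ le x y -> exists a, P a /\ a x /\ ~ a y) /\
  (forall x y, ~ sq x y ->
     exists a b, P a /\ P b /\ rimp sq a b x /\ a y /\ ~ b y).

Definition boolean_subalgebra (P : (X -> Prop) -> Prop) : Prop :=
  P fullset /\ P emptyset /\
  (forall a, P a -> P (setC a)) /\
  (forall a b, P a -> P b -> P (setI a b)) /\
  (forall a b, P a -> P b -> P (setU a b)).

Definition general_S4K (Ri Rm : X -> X -> Prop)
    (P : (X -> Prop) -> Prop) : Prop :=
  (forall x, Ri x x) /\
  (forall x y z, Ri x y -> Ri y z -> Ri x z) /\
  boolean_subalgebra P /\
  (forall a, P a -> P (box Ri a)) /\
  (forall a, P a -> P (box Rm a)).

Definition tight (R : X -> X -> Prop) (P : (X -> Prop) -> Prop) : Prop :=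
  forall x y, R x y <-> (forall a, P a -> box R a x -> a y).

Definition descriptive_S4K (Ri Rm : X -> X -> Prop)
    (P : (X -> Prop) -> Prop) : Prop :=
  general_S4K Ri Rm P /\
  (forall x y, x <> y -> exists a, P a /\ a x /\ ~ a y) /\
  tight Ri P /\ tight Rm P /\
  (forall F : (X -> Prop) -> Prop,
     (forall c, F c -> P c) -> FIP F -> has_nonempty_intersection F).

(* ---------- sigma-hat: Boolean algebra generated by P ---------- *)
Definition gen_BA (P : (X -> Prop) -> Prop) : (X -> Prop) -> Prop :=
  fun a => forall Q, boolean_subalgebra Q -> (forall b, P b -> Q b) -> Q a.

End Sets.

(* ---------- rho-hat ---------- *)
Unset Implicit Arguments.
Section Rho.
Variables (X : Type) (Ri Rm : X -> X -> Prop) (P : (X -> Prop) -> Prop).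

Definition simR (x y : X) : Prop := Ri x y /\ Ri y x.

Definition Rmstar (x z : X) : Prop := exists y, Ri x y /\ Rm y z.

Definition cls : Type := { C : X -> Prop | exists x, C = simR x }.

Definition cls_of (x : X) : cls := exist _ (simR x) (ex_intro _ x eq_refl).

Definition rho_le (C D : cls) : Prop :=
  exists x y, C = cls_of x /\ D = cls_of y /\ Ri x y.

Definition rho_sq (C D : cls) : Prop :=
  exists x y, C = cls_of x /\ D = cls_of y /\
    exists y', simR y' y /\ Rmstar x y'.

Definition rho_P (A : cls -> Prop) : Prop :=
  exists b, P b /\ A = (fun C => exists x, C = cls_of x /\ box Ri b x).

End Rho.

(* The Boolean algebra generated by the lattice P consists of
   the normal forms: finite intersections of clauses (X \ b) U a with a, b in
   P.  The box of such a normal form is an intersection of relational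
   implications a => b, which lie in P; hence the generated algebra is closed
   under both boxes.  Tightness and differentiation are immediate from the two
   refinement conditions.  Compactness is a two-step Alexander subbase
   argument: a maximal family with the finite intersection property is prime,
   so it picks one side of every clause, and the chosen sides lie in P or are
   complements of P, where compactness of the -o-frame applies.

   Every set of classes in rho_P is induced by an interior
   [Ri] b, so all frame operations on classes are computed by Boolean and
   modal operations on X, and compactness transfers along the surjection
   x |-> [x].  The two refinement conditions come from tightness; for the
   relation between classes one applies compactness to a downward directed
   family of sets of P, first to show that the composite relation Ri;Rm is
   tight with respect to [Ri][Rm]. *)

From Stdlib Require Import List Classical FunctionalExtensionality PropExtensionality ProofIrrelevance.
From mathcomp Require classical_sets.
Import ListNotations.
Set Implicit Arguments.

Section SetFamilies.
Variable X : Type.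
Implicit Types (a b c d e u v : X -> Prop) (F G M : (X -> Prop) -> Prop).

Lemma set_ext a b : (forall x, a x <-> b x) -> a = b.
Proof.
  intros H. apply functional_extensionality; intros x.
  apply propositional_extensionality, H.
Qed.

Lemma FIP_sub F G : (forall c, F c -> G c) -> FIP G -> FIP F.
Proof. intros HFG HG l Hl. apply HG. intros a Ha. apply HFG, Hl, Ha. Qed.

Definition adjoin M d : (X -> Prop) -> Prop := fun c => M c \/ c = d.

Lemma FIP_adjoin M d :
  FIP (adjoin M d) <->
  forall l, (forall c, In c l -> M c) -> exists x, (forall c, In c l -> c x) /\ d x.
Proof.
  split.
  - intros H l Hl. destruct (H (d :: l)) as [x Hx].
    + intros c [<-|Hc]; [right | left; apply Hl]; auto.
    + exists x. split; [intros c Hc; apply Hx; simpl|apply Hx; simpl]; auto.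
  - intros H l Hl.
    assert (Hsplit : exists m, (forall c, In c m -> M c) /\
              forall x, (forall c, In c m -> c x) -> d x -> forall c, In c l -> c x).
    { induction l as [|c l IH].
      - exists []. split; [intros _ []|intros x _ _ _ []].
      - destruct (IH (fun c' Hc' => Hl c' (or_intror Hc'))) as [m [Hm Hmx]].
        destruct (Hl c (or_introl eq_refl)) as [Mc| ->].
        + exists (c :: m). split; [intros e [<-|He]; auto|].
          intros x Hx dx e [<-|He]; [apply Hx; simpl; auto|].
          apply (Hmx x); auto. intros c' Hc'. apply Hx; simpl; auto.
        + exists m. split; auto. intros x Hx dx e [<-|He]; [exact dx|].
          apply (Hmx x); auto. }
    destruct Hsplit as [m [Hm Hmx]]. destruct (H m Hm) as [x [Hx dx]].
    exists x. apply Hmx; auto.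
Qed.

(* A maximal family with the finite intersection property: an ultrafilter
   of subsets of X, described without mentioning its filter structure. *)
Definition maximal_FIP M : Prop := FIP M /\ forall d, FIP (adjoin M d) -> M d.

Lemma list_in_chain F (C : ((X -> Prop) -> Prop) -> Prop) :
  (forall G G', C G -> C G' -> (forall c, G c -> G' c) \/ (forall c, G' c -> G c)) ->
  forall l, (forall c, In c l -> F c \/ exists G, C G /\ G c) ->
  (forall c, In c l -> F c) \/ exists G, C G /\ forall c, In c l -> F c \/ G c.
Proof.
  intros Htot l. induction l as [|d l IH]; intros Hl.
  - left; intros c [].
  - destruct (IH (fun c' Hc' => Hl c' (or_intror Hc'))) as [IH'|[G [CG HG]]];
      destruct (Hl d (or_introl eq_refl)) as [Fd|[G' [CG' G'd]]].
    + left. intros c [<-|Hc]; auto.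
    + right. exists G'. split; auto. intros c [<-|Hc]; auto.
    + right. exists G. split; auto. intros c [<-|Hc]; auto.
    + right. destruct (Htot G G' CG CG') as [S|S].
      * exists G'. split; auto. intros c [<-|Hc]; auto.
        destruct (HG c Hc); auto.
      * exists G. split; auto. intros c [<-|Hc]; auto.
Qed.

Lemma maximal_FIP_extension F :
  FIP F -> exists M, (forall c, F c -> M c) /\ maximal_FIP M.
Proof.
  intros HF.
  pose (Q := fun A : (X -> Prop) -> Prop => FIP (fun c => F c \/ A c)).
  destruct (@classical_sets.Zorn_bigcup (X -> Prop) Q) as [A [QA Amax]].
  - intros C CQ Ctot l Hl.
    destruct (list_in_chain F C Ctot l) as [HlF|[G [CG HG]]].
    + intros c Hc. destruct (Hl c Hc) as [Fc|[G CG Gc]]; auto.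
      right. exists G; auto.
    + apply HF, HlF.
    + apply (CQ G CG), HG.
  - exists (fun c => F c \/ A c). split; [auto|split; [exact QA|]].
    intros d Hd. right. apply NNPP. intros nAd.
    apply (Amax (fun c => A c \/ c = d)).
    + split; [intros c Ac; left; exact Ac|].
      intros Hsub. apply nAd. apply (Hsub d). right; reflexivity.
    + eapply FIP_sub; [|exact Hd]. unfold adjoin. intros c; tauto.
Qed.

Section MaximalFIP.
Variable M : (X -> Prop) -> Prop.
Hypothesis HM : maximal_FIP M.

Lemma maximal_FIP_up c d : M c -> (forall x, c x -> d x) -> M d.
Proof.
  intros Mc Hcd. apply (proj2 HM), FIP_adjoin. intros l Hl.
  destruct (proj1 HM (c :: l)) as [x Hx].
  - intros e [<-|He]; auto.
  - exists x. split; [intros e He; apply Hx; simpl; auto|apply Hcd, Hx; simpl; auto].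
Qed.

Lemma maximal_FIP_union u v : M (setU u v) -> M u \/ M v.
Proof.
  intros Muv. apply NNPP. intros Hn.
  assert (Hsep : forall w, ~ M w -> exists l, (forall c, In c l -> M c) /\
                    forall x, (forall c, In c l -> c x) -> ~ w x).
  { intros w nMw. apply NNPP. intros Hno. apply nMw, (proj2 HM), FIP_adjoin.
    intros l Hl. apply NNPP. intros Hnx. apply Hno. exists l. split; auto.
    intros x Hx wx. apply Hnx. exists x; auto. }
  destruct (Hsep u) as [lu [Hlu Hu]]; [tauto|].
  destruct (Hsep v) as [lv [Hlv Hv]]; [tauto|].
  destruct (proj1 HM (setU u v :: lu ++ lv)) as [x Hx].
  - intros c [<-|Hc]; auto. apply in_app_iff in Hc. destruct Hc; auto.
  - destruct (Hx (setU u v)) as [ux|vx]; [simpl; auto| |].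
    + apply (Hu x); auto. intros c Hc; apply Hx; simpl; rewrite in_app_iff; auto.
    + apply (Hv x); auto. intros c Hc; apply Hx; simpl; rewrite in_app_iff; auto.
Qed.
End MaximalFIP.

(* [c] is the intersection of the binary unions of members of [S] that
   contain it. *)
Definition pair_covered (S : (X -> Prop) -> Prop) c : Prop :=
  forall x, (forall u v, S u -> S v -> (forall y, c y -> u y \/ v y) -> u x \/ v x) -> c x.

(* A two-step Alexander subbase argument: compactness for families of
   members of S extends to families of pair-covered sets. *)
Lemma pair_covered_compact (S : (X -> Prop) -> Prop) :
  (forall G, (forall c, G c -> S c) -> FIP G -> has_nonempty_intersection G) ->
  forall F, (forall c, F c -> pair_covered S c) -> FIP F -> has_nonempty_intersection F.
Proof.
  intros HS F Hcov HF.
  destruct (maximal_FIP_extension HF) as [M [FM HM]].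
  destruct (HS (fun c => M c /\ S c)) as [x Hx].
  - intros c [_ Sc]; exact Sc.
  - eapply FIP_sub; [|exact (proj1 HM)]. intros c [Mc _]; exact Mc.
  - exists x. intros c Fc. apply Hcov; auto. intros u v Su Sv Hc.
    assert (Muv : M (setU u v)) by (apply (maximal_FIP_up HM c); auto).
    destruct (maximal_FIP_union HM u v Muv); [left|right]; apply Hx; auto.
Qed.

Lemma directed_compact (Q : (X -> Prop) -> Prop) :
  (forall F, (forall c, F c -> Q c) -> FIP F -> has_nonempty_intersection F) ->
  forall G, (forall c, G c -> Q c) -> (exists c, G c) ->
  (forall c d, G c -> G d -> exists e, G e /\ forall x, e x -> c x /\ d x) ->
  (forall c, G c -> exists x, c x) ->
  has_nonempty_intersection G.
Proof.
  intros HQ G GQ [c0 Gc0] Gdir Gne. apply HQ; auto.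
  intros l Hl.
  assert (Hlow : exists e, G e /\ forall x, e x -> forall c, In c l -> c x).
  { induction l as [|c l IH].
    - exists c0. split; [auto|intros x _ _ []].
    - destruct (IH (fun c' Hc' => Hl c' (or_intror Hc'))) as [e [Ge He]].
      destruct (Gdir c e) as [e' [Ge' He']]; [apply Hl; simpl; auto|auto|].
      exists e'. split; auto. intros x e'x d [<-|Hd]; [apply He'; auto|].
      apply He; [apply He'|]; auto. }
  destruct Hlow as [e [Ge He]]. destruct (Gne e Ge) as [x ex].
  exists x. apply He, ex.
Qed.
End SetFamilies.

Lemma FIP_preimage (X Y : Type) (f : X -> Y) (F : (Y -> Prop) -> Prop) :
  (forall y, exists x, f x = y) -> FIP F ->
  FIP (fun e => exists c, F c /\ e = fun x => c (f x)).
Proof.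
  intros Hf HF l Hl.
  assert (Hlift : exists m, (forall c, In c m -> F c) /\
            forall x, (forall c, In c m -> c (f x)) -> forall e, In e l -> e x).
  { induction l as [|e l IH].
    - exists []. split; [intros _ []|intros x _ _ []].
    - destruct (IH (fun e' He' => Hl e' (or_intror He'))) as [m [Hm Hmx]].
      destruct (Hl e (or_introl eq_refl)) as [c [Fc ->]].
      exists (c :: m). split; [intros d [<-|Hd]; auto|].
      intros x Hx d [<-|Hd]; [apply Hx; simpl; auto|].
      apply (Hmx x); auto. intros c' Hc'. apply Hx. simpl; auto. }
  destruct Hlift as [m [Hm Hmx]]. destruct (HF m Hm) as [y Hy].
  destruct (Hf y) as [x <-]. exists x. apply Hmx, Hy.
Qed.

Section Modalities.
Variable X : Type.
Implicit Types (R S : X -> X -> Prop) (a b u v : X -> Prop).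

Lemma box_impl R u v : box R (setU (setC u) v) = rimp R u v.
Proof.
  apply set_ext. intros x. unfold box, rimp, setU, setC. split.
  - intros H y Rxy uy. destruct (H y Rxy); tauto.
  - intros H y Rxy. destruct (classic (u y)); auto.
Qed.

Lemma box_setI R a b : box R (setI a b) = setI (box R a) (box R b).
Proof. apply set_ext. intros x. unfold box, setI. firstorder. Qed.

Lemma box_mono R a b x : (forall y, a y -> b y) -> box R a x -> box R b x.
Proof. intros Hab H y Rxy. apply Hab, H, Rxy. Qed.

Section Preorder.
Variable R : X -> X -> Prop.
Hypothesis R_refl : forall x, R x x.
Hypothesis R_trans : forall x y z, R x y -> R y z -> R x z.

Lemma box_upset a : upset R (box R a).
Proof. intros x y Rxy H z Ryz. apply H. eapply R_trans; eauto. Qed.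

Lemma box_of_upset a : upset R a -> box R a = a.
Proof.
  intros Ha. apply set_ext. intros x.
  split; [intros H; apply H, R_refl|intros H y Rxy; eapply Ha; eauto].
Qed.

Lemma box_setU_box a b : box R (setU (box R a) (box R b)) = setU (box R a) (box R b).
Proof.
  apply box_of_upset. intros x y Rxy [H|H]; [left|right]; eapply box_upset; eauto.
Qed.
End Preorder.

Lemma tight_intro R (Q : (X -> Prop) -> Prop) :
  (forall x y, (forall a, Q a -> box R a x -> a y) -> R x y) -> tight R Q.
Proof. intros H x y. split; [intros Rxy a _ Ha; apply Ha, Rxy|apply H]. Qed.
End Modalities.

Section NormalForms.
Variable X : Type.
Variable P : (X -> Prop) -> Prop.
Implicit Types (a b c d : X -> Prop) (p q : (X -> Prop) * (X -> Prop))
  (l m : list ((X -> Prop) * (X -> Prop))).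

(* The pair (b, a) codes the clause "b implies a", i.e. (X \ b) U a. *)
Definition clause p : X -> Prop := setU (setC (fst p)) (snd p).

Definition nf l : X -> Prop := fun x => forall p, In p l -> clause p x.

Definition P_pairs l : Prop := forall p, In p l -> P (fst p) /\ P (snd p).

Definition is_nf c : Prop := exists l, P_pairs l /\ c = nf l.

Lemma gen_BA_boolean : boolean_subalgebra (gen_BA P).
Proof.
  unfold gen_BA. repeat split.
  - intros Q HQ _. apply HQ.
  - intros Q HQ _. apply HQ.
  - intros a Ha Q HQ HPQ. apply HQ, Ha; auto.
  - intros a b Ha Hb Q HQ HPQ. apply HQ; [apply Ha|apply Hb]; auto.
  - intros a b Ha Hb Q HQ HPQ. apply HQ; [apply Ha|apply Hb]; auto.
Qed.

Lemma gen_BA_incl a : P a -> gen_BA P a.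
Proof. intros Ha Q _ H. auto. Qed.

Lemma nf_nil : nf [] = @fullset X.
Proof. apply set_ext. intros x. unfold nf, fullset. simpl. tauto. Qed.

Lemma nf_cons p l : nf (p :: l) = setI (clause p) (nf l).
Proof.
  apply set_ext. intros x. unfold nf, setI. simpl. split.
  - intros H. split; auto.
  - intros [Hp Hl] q [<-|Hq]; auto.
Qed.

Lemma nf_app l m : nf (l ++ m) = setI (nf l) (nf m).
Proof.
  apply set_ext. intros x. unfold nf, setI. split.
  - intros H. split; intros p Hp; apply H, in_app_iff; auto.
  - intros [Hl Hm] p Hp. apply in_app_iff in Hp. destruct Hp; auto.
Qed.

(* The union of two normal forms, distributed clause by clause. *)
Definition merge pq : (X -> Prop) * (X -> Prop) :=
  (setI (fst (fst pq)) (fst (snd pq)), setU (snd (fst pq)) (snd (snd pq))).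

Lemma nf_union l m : setU (nf l) (nf m) = nf (map merge (list_prod l m)).
Proof.
  apply set_ext. intros x. unfold nf, setU. split.
  - intros Hx r Hr. apply in_map_iff in Hr. destruct Hr as [[p q] [<- Hpq]].
    apply in_prod_iff in Hpq. destruct Hpq as [Hp Hq].
    unfold clause, merge, setU, setI, setC in *; simpl.
    destruct Hx as [Hx|Hx]; [destruct (Hx p Hp)|destruct (Hx q Hq)]; tauto.
  - intros Hx. apply NNPP. intros Hn.
    apply not_or_and in Hn. destruct Hn as [Hl Hm].
    apply not_all_ex_not in Hl. destruct Hl as [p Hp].
    apply not_all_ex_not in Hm. destruct Hm as [q Hq].
    apply imply_to_and in Hp. apply imply_to_and in Hq.
    destruct Hp as [Hp Hpx]. destruct Hq as [Hq Hqx].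
    pose proof (Hx (merge (p, q)) (in_map merge _ _ (in_prod l m p q Hp Hq))) as Hpq.
    unfold clause, merge, setU, setI, setC in *. simpl in Hpq. tauto.
Qed.

Section Lattice.
Hypothesis P_full : P (@fullset X).
Hypothesis P_empty : P (@emptyset X).
Hypothesis P_I : forall a b, P a -> P b -> P (setI a b).
Hypothesis P_U : forall a b, P a -> P b -> P (setU a b).

Lemma is_nf_union c d : is_nf c -> is_nf d -> is_nf (setU c d).
Proof.
  intros [l [Hl ->]] [m [Hm ->]]. exists (map merge (list_prod l m)).
  split; [|apply nf_union].
  intros r Hr. apply in_map_iff in Hr. destruct Hr as [[p q] [<- Hpq]].
  apply in_prod_iff in Hpq. destruct Hpq as [Hp Hq].
  destruct (Hl p Hp), (Hm q Hq). simpl. auto.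
Qed.

(* Complements: X \ nf (p :: l) = (fst p \ snd p) U (X \ nf l), and
   fst p \ snd p = nf [(X, fst p); (snd p, 0)]. *)
Lemma is_nf_compl c : is_nf c -> is_nf (setC c).
Proof.
  intros [l [Hl ->]]. induction l as [|p l IH].
  - exists [(@fullset X, @emptyset X)]. split.
    + intros q [<-|[]]; simpl; auto.
    + apply set_ext. intros x. rewrite nf_cons, !nf_nil.
      unfold setC, setI, clause, setU, fullset, emptyset. simpl. tauto.
  - assert (E : setC (nf (p :: l)) =
                setU (nf [(@fullset X, fst p); (snd p, @emptyset X)]) (setC (nf l))).
    { apply set_ext. intros x. rewrite !nf_cons, nf_nil.
      unfold setC, setI, clause, setU, setC, fullset, emptyset. simpl. tauto. }
    destruct (Hl p (or_introl eq_refl)) as [Pb Pa].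
    rewrite E. apply is_nf_union.
    + exists [(@fullset X, fst p); (snd p, @emptyset X)]. split; auto.
      intros q [<-|[<-|[]]]; simpl; auto.
    + apply IH. intros q Hq. apply Hl. simpl; auto.
Qed.

Lemma is_nf_boolean : boolean_subalgebra is_nf.
Proof.
  repeat split.
  - exists []. split; [intros _ []|symmetry; apply nf_nil].
  - exists [(@fullset X, @emptyset X)]. split.
    + intros q [<-|[]]; simpl; auto.
    + apply set_ext. intros x. rewrite nf_cons, nf_nil.
      unfold setI, clause, setU, setC, fullset, emptyset. simpl. tauto.
  - apply is_nf_compl.
  - intros c d [l [Hl ->]] [m [Hm ->]]. exists (l ++ m). split; [|symmetry; apply nf_app].
    intros p Hp. apply in_app_iff in Hp. destruct Hp; auto.
  - apply is_nf_union.
Qed.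

Lemma gen_BA_is_nf c : gen_BA P c <-> is_nf c.
Proof.
  split.
  - intros Hc. apply Hc; [apply is_nf_boolean|].
    intros a Pa. exists [(@fullset X, a)]. split.
    + intros q [<-|[]]; simpl; auto.
    + apply set_ext. intros x. rewrite nf_cons, nf_nil.
      unfold setI, clause, setU, setC, fullset. simpl. tauto.
  - intros [l [Hl ->]]. destruct gen_BA_boolean as [GF [_ [GC [GI GU]]]].
    induction l as [|p l IH]; [rewrite nf_nil; exact GF|].
    destruct (Hl p (or_introl eq_refl)). rewrite nf_cons.
    apply GI; [apply GU; [apply GC|]; apply gen_BA_incl; auto|].
    apply IH. intros q Hq. apply Hl. simpl; auto.
Qed.

(* If P is closed under the relational implication of R, then the generated
   Boolean algebra is closed under [R]: [R] (nf l) is an intersection of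
   relational implications. *)
Lemma gen_BA_box (R : X -> X -> Prop) :
  (forall a b, P a -> P b -> P (rimp R a b)) ->
  forall c, gen_BA P c -> gen_BA P (box R c).
Proof.
  intros HR c Hc. destruct (proj1 (gen_BA_is_nf c) Hc) as [l [Hl ->]]. clear Hc.
  destruct gen_BA_boolean as [GF [_ [_ [GI _]]]].
  induction l as [|p l IH].
  - rewrite nf_nil. replace (box R (@fullset X)) with (@fullset X); [exact GF|].
    apply set_ext. intros x. unfold box, fullset. tauto.
  - destruct (Hl p (or_introl eq_refl)).
    rewrite nf_cons, box_setI. unfold clause. rewrite box_impl.
    apply GI; [apply gen_BA_incl; auto|].
    apply IH. intros q Hq. apply Hl. simpl; auto.
Qed.

Lemma gen_BA_pair_covered c :
  gen_BA P c -> pair_covered (fun d => P d \/ exists a, P a /\ d = setC a) c.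
Proof.
  intros Hc. destruct (proj1 (gen_BA_is_nf c) Hc) as [l [Hl ->]].
  intros x Hx p Hp. destruct (Hl p Hp) as [Pb Pa].
  apply Hx.
  - right. exists (fst p). auto.
  - left. exact Pa.
  - intros y Hy. apply (Hy p Hp).
Qed.
End Lattice.
End NormalForms.

Section Sigma.
Variable X : Type.
Variables (le sq : X -> X -> Prop) (P : (X -> Prop) -> Prop).
Hypothesis le_refl : forall x, le x x.
Hypothesis le_trans : forall x y z, le x y -> le y z -> le x z.
Hypothesis le_antisym : forall x y, le x y -> le y x -> x = y.
Hypothesis P_upset : forall a, P a -> upset le a.
Hypothesis P_full : P (@fullset X).
Hypothesis P_empty : P (@emptyset X).
Hypothesis P_I : forall a b, P a -> P b -> P (setI a b).
Hypothesis P_U : forall a b, P a -> P b -> P (setU a b).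
Hypothesis P_rimp_le : forall a b, P a -> P b -> P (rimp le a b).
Hypothesis P_rimp_sq : forall a b, P a -> P b -> P (rimp sq a b).
Hypothesis P_compact : mframe_compact P.
Hypothesis le_refined : forall x y, ~ le x y -> exists a, P a /\ a x /\ ~ a y.
Hypothesis sq_refined : forall x y, ~ sq x y ->
  exists a b, P a /\ P b /\ rimp sq a b x /\ a y /\ ~ b y.

(* The generated algebra is closed under the boxes of le and sq because P is
   closed under the corresponding relational implications. *)
Lemma sigma_general : general_S4K le sq (gen_BA P).
Proof.
  repeat split; auto; try apply gen_BA_boolean;
    intros a Ha; apply gen_BA_box; auto.
Qed.

(* Distinct points are separated by a set of P or by its complement. *)
Lemma sigma_differentiated x y : x <> y -> exists a, gen_BA P a /\ a x /\ ~ a y.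
Proof.
  intros Hxy. destruct (@gen_BA_boolean X P) as [_ [_ [GC _]]].
  destruct (classic (le x y)) as [Hle|Hle].
  - assert (Hyx : ~ le y x) by (intros Hyx; apply Hxy, le_antisym; auto).
    destruct (le_refined Hyx) as [a [Pa [ay nax]]].
    exists (setC a). split; [apply GC, gen_BA_incl; auto|unfold setC; tauto].
  - destruct (le_refined Hle) as [a [Pa [ax nay]]].
    exists a. split; [apply gen_BA_incl|]; auto.
Qed.

(* Sets of P are upsets, so they already witness tightness of le. *)
Lemma sigma_tight_le : tight le (gen_BA P).
Proof.
  apply tight_intro. intros x y H. apply NNPP. intros Hn.
  destruct (le_refined Hn) as [a [Pa [ax nay]]].
  apply nay, H; [apply gen_BA_incl; auto|].
  rewrite box_of_upset; auto.
Qed.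

(* A witness (a, b) of sq-refinement yields the clause a => b, whose box
   contains x but which misses y. *)
Lemma sigma_tight_sq : tight sq (gen_BA P).
Proof.
  apply tight_intro. intros x y H. apply NNPP. intros Hn.
  destruct (sq_refined Hn) as [a [b [Pa [Pb [Hx [ay nby]]]]]].
  destruct (@gen_BA_boolean X P) as [_ [_ [GC [_ GU]]]].
  assert (Hc : setU (setC a) b y).
  { apply H; [apply GU; [apply GC|]; apply gen_BA_incl; auto|].
    rewrite box_impl. exact Hx. }
  destruct Hc as [Hc|Hc]; auto.
Qed.

(* Compactness of the patch topology: every member of the generated algebra
   is pair-covered by P and the complements of P. *)
Lemma sigma_compact : forall F, (forall c, F c -> gen_BA P c) -> FIP F ->
  has_nonempty_intersection F.
Proof.
  intros F HF. apply (pair_covered_compact P_compact).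
  intros c Fc. apply gen_BA_pair_covered; auto.
Qed.
End Sigma.

Lemma sigma_descriptive (X : Type) (le sq : X -> X -> Prop) (P : (X -> Prop) -> Prop) :
  descriptive_mframe le sq P -> descriptive_S4K le sq (gen_BA P).
Proof.
  intros [[Hr [Ht [Ha [_ [Hup [HF [HE [HI [HU [Hrl Hrs]]]]]]]]]] [Hcomp [Hle Hsq]]].
  split; [|split; [|split; [|split]]].
  - eapply sigma_general; eauto.
  - eapply sigma_differentiated; eauto.
  - eapply sigma_tight_le; eauto.
  - eapply sigma_tight_sq; eauto.
  - eapply sigma_compact; eauto.
Qed.

Section Classes.
Variable X : Type.
Variable Ri : X -> X -> Prop.
Hypothesis Ri_refl : forall x, Ri x x.
Hypothesis Ri_trans : forall x y z, Ri x y -> Ri y z -> Ri x z.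

Notation cls := (cls X Ri).
Notation cls_of := (cls_of X Ri).
Notation simR := (simR X Ri).

Lemma cls_ext (C D : cls) : proj1_sig C = proj1_sig D -> C = D.
Proof.
  destruct C as [C HC], D as [D HD]. simpl. intros ->.
  f_equal. apply proof_irrelevance.
Qed.

Lemma cls_rep (C : cls) : exists x, C = cls_of x.
Proof. destruct C as [C [x Hx]]. exists x. apply cls_ext. exact Hx. Qed.

Lemma cls_of_eq x y : simR x y -> cls_of x = cls_of y.
Proof.
  intros [Hxy Hyx]. apply cls_ext, set_ext. intros z. simpl. unfold simR.
  split; intros [H1 H2]; split; eauto.
Qed.

Lemma cls_of_inv x y : cls_of x = cls_of y -> simR x y.
Proof.
  intros E. apply (f_equal (@proj1_sig _ _)) in E. simpl in E.
  rewrite E. split; auto.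
Qed.

Lemma cls_set_ext (A B : cls -> Prop) :
  (forall x, A (cls_of x) <-> B (cls_of x)) -> A = B.
Proof. intros H. apply set_ext. intros C. destruct (cls_rep C) as [x ->]. apply H. Qed.

Definition rho_set (b : X -> Prop) : cls -> Prop :=
  fun C => exists x, C = cls_of x /\ box Ri b x.

Lemma rho_set_of b x : rho_set b (cls_of x) <-> box Ri b x.
Proof.
  split.
  - intros [x' [E Hb]]. destruct (cls_of_inv E) as [_ Hx'x].
    eapply box_upset; eauto.
  - intros H. exists x. auto.
Qed.

Lemma rho_P_intro (P : (X -> Prop) -> Prop) (A : cls -> Prop) b :
  P b -> (forall x, A (cls_of x) <-> box Ri b x) -> rho_P X Ri P A.
Proof.
  intros Pb HA. exists b. split; auto. apply cls_set_ext. intros x.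
  rewrite HA. symmetry. apply rho_set_of.
Qed.

Lemma rho_P_elim (P : (X -> Prop) -> Prop) (A : cls -> Prop) :
  rho_P X Ri P A -> exists b, P b /\ A = rho_set b.
Proof. intros H. exact H. Qed.

Lemma rho_le_of x y : rho_le X Ri (cls_of x) (cls_of y) <-> Ri x y.
Proof.
  split.
  - intros [x' [y' [E1 [E2 H]]]].
    destruct (cls_of_inv E1), (cls_of_inv E2). eauto.
  - intros H. exists x, y. auto.
Qed.

Lemma rho_le_rimp a b x :
  rimp (rho_le X Ri) (rho_set a) (rho_set b) (cls_of x) <->
  rimp Ri (box Ri a) (box Ri b) x.
Proof.
  split.
  - intros H y Rxy Ha. apply rho_set_of, H; [apply rho_le_of|apply rho_set_of]; auto.
  - intros H D. destruct (cls_rep D) as [y ->].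
    rewrite rho_le_of, !rho_set_of. apply H.
Qed.

Section Modal.
Variable Rm : X -> X -> Prop.

Lemma rho_sq_of x D :
  rho_sq X Ri Rm (cls_of x) D <-> exists z, Rmstar X Ri Rm x z /\ D = cls_of z.
Proof.
  split.
  - intros [x' [y [E1 [E2 [z [Hzy [w [Hx'w Hwz]]]]]]]].
    destruct (cls_of_inv E1) as [Hxx' _]. exists z. split.
    + exists w. split; eauto.
    + rewrite E2. symmetry. apply cls_of_eq, Hzy.
  - intros [z [Hxz ->]]. exists x, z. repeat split; auto. exists z. repeat split; auto.
Qed.

Lemma box_Rmstar c x : box Ri (box Rm c) x <-> box (Rmstar X Ri Rm) c x.
Proof.
  split.
  - intros H z [w [Hxw Hwz]]. exact (H w Hxw z Hwz).
  - intros H w Hxw z Hwz. apply H. exists w. auto.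
Qed.

Lemma rho_sq_rimp a b x :
  rimp (rho_sq X Ri Rm) (rho_set a) (rho_set b) (cls_of x) <->
  rimp (Rmstar X Ri Rm) (box Ri a) (box Ri b) x.
Proof.
  split.
  - intros H z Hxz Ha. apply rho_set_of, H; [apply rho_sq_of|apply rho_set_of]; eauto.
  - intros H D HD. apply rho_sq_of in HD. destruct HD as [z [Hxz ->]].
    rewrite !rho_set_of. apply H, Hxz.
Qed.
End Modal.
End Classes.

Section Rho.
Variable X : Type.
Variables (Ri Rm : X -> X -> Prop) (P : (X -> Prop) -> Prop).
Hypothesis Ri_refl : forall x, Ri x x.
Hypothesis Ri_trans : forall x y z, Ri x y -> Ri y z -> Ri x z.
Hypothesis P_full : P (@fullset X).
Hypothesis P_empty : P (@emptyset X).
Hypothesis P_C : forall a, P a -> P (setC a).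
Hypothesis P_I : forall a b, P a -> P b -> P (setI a b).
Hypothesis P_U : forall a b, P a -> P b -> P (setU a b).
Hypothesis P_box_i : forall a, P a -> P (box Ri a).
Hypothesis P_box_m : forall a, P a -> P (box Rm a).
Hypothesis Ri_tight : tight Ri P.
Hypothesis Rm_tight : tight Rm P.
Hypothesis P_compact : forall F, (forall c, F c -> P c) -> FIP F ->
  has_nonempty_intersection F.

Notation cls_of := (cls_of X Ri).
Notation rho_le := (rho_le X Ri).
Notation rho_sq := (rho_sq X Ri Rm).
Notation rho_P := (rho_P X Ri P).
Notation Rmstar := (Rmstar X Ri Rm).

Lemma rho_le_partial_order :
  (forall C, rho_le C C) /\
  (forall C D E, rho_le C D -> rho_le D E -> rho_le C E) /\
  (forall C D, rho_le C D -> rho_le D C -> C = D).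
Proof.
  split; [|split].
  - intros C. destruct (cls_rep C) as [x ->]. apply rho_le_of; auto.
  - intros C D E. destruct (cls_rep C) as [x ->], (cls_rep D) as [y ->],
      (cls_rep E) as [z ->]. rewrite !rho_le_of; eauto.
  - intros C D. destruct (cls_rep C) as [x ->], (cls_rep D) as [y ->].
    rewrite !rho_le_of; auto. intros Hxy Hyx. apply cls_of_eq; auto. split; auto.
Qed.

Lemma rho_le_sq C D E : rho_le C D -> rho_sq D E -> rho_sq C E.
Proof.
  destruct (cls_rep C) as [x ->], (cls_rep D) as [y ->].
  rewrite rho_le_of, !rho_sq_of; auto.
  intros Hxy [z [[w [Hyw Hwz]] ->]]. exists z. split; auto. exists w. eauto.
Qed.

Lemma rho_P_upset A : rho_P A -> upset rho_le A.
Proof.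
  intros HA C D. destruct (rho_P_elim HA) as [b [_ ->]].
  destruct (cls_rep C) as [x ->], (cls_rep D) as [y ->].
  rewrite rho_le_of, !rho_set_of; auto. intros Hxy Hx. eapply box_upset; eauto.
Qed.

Lemma rho_P_full : rho_P (@fullset _).
Proof.
  apply rho_P_intro with (@fullset X); auto. intros x. unfold fullset, box. tauto.
Qed.

Lemma rho_P_empty : rho_P (@emptyset _).
Proof.
  apply rho_P_intro with (@emptyset X); auto. intros x. unfold emptyset, box.
  split; [tauto|intros H; apply (H x), Ri_refl].
Qed.

Lemma rho_P_setI A B : rho_P A -> rho_P B -> rho_P (setI A B).
Proof.
  intros HA HB. destruct (rho_P_elim HA) as [a [Pa ->]], (rho_P_elim HB) as [b [Pb ->]].
  apply rho_P_intro with (setI a b); auto. intros x.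
  rewrite box_setI. unfold setI. rewrite !rho_set_of; tauto.
Qed.

Lemma rho_P_setU A B : rho_P A -> rho_P B -> rho_P (setU A B).
Proof.
  intros HA HB. destruct (rho_P_elim HA) as [a [Pa ->]], (rho_P_elim HB) as [b [Pb ->]].
  apply rho_P_intro with (setU (box Ri a) (box Ri b)); auto. intros x.
  rewrite box_setU_box; auto. unfold setU. rewrite !rho_set_of; tauto.
Qed.

Lemma rho_P_rimp_le A B : rho_P A -> rho_P B -> rho_P (rimp rho_le A B).
Proof.
  intros HA HB. destruct (rho_P_elim HA) as [a [Pa ->]], (rho_P_elim HB) as [b [Pb ->]].
  apply rho_P_intro with (setU (setC (box Ri a)) (box Ri b)); auto. intros x.
  rewrite rho_le_rimp, box_impl; auto. tauto.
Qed.

Lemma rho_P_rimp_sq A B : rho_P A -> rho_P B -> rho_P (rimp rho_sq A B).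
Proof.
  intros HA HB. destruct (rho_P_elim HA) as [a [Pa ->]], (rho_P_elim HB) as [b [Pb ->]].
  apply rho_P_intro with (box Rm (setU (setC (box Ri a)) (box Ri b))); auto. intros x.
  rewrite rho_sq_rimp, box_Rmstar, box_impl; auto. tauto.
Qed.

Lemma rho_general : general_mframe rho_le rho_sq rho_P.
Proof.
  destruct rho_le_partial_order as [Hr [Ht Ha]].
  repeat split; [exact Hr|exact Ht|exact Ha|exact rho_le_sq|exact rho_P_upset
    |exact rho_P_full|exact rho_P_empty|exact rho_P_setI|exact rho_P_setU
    |exact rho_P_rimp_le|exact rho_P_rimp_sq].
Qed.

(* Compactness transfers to classes: preimages along cls_of of the sets of
   rho_P and their complements are sets of P. *)
Lemma rho_compact : mframe_compact rho_P.
Proof.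
  intros F HF HFIP.
  destruct (P_compact (F := fun e => exists c, F c /\ e = fun x => c (cls_of x))) as [x Hx].
  - intros e [c [Fc ->]].
    destruct (HF c Fc) as [HA|[A [HA ->]]]; destruct (rho_P_elim HA) as [b [Pb ->]].
    + replace (fun x => rho_set b (cls_of x)) with (box Ri b); auto.
      apply set_ext. intros x. symmetry. apply rho_set_of; auto.
    + replace (fun x => setC (rho_set b) (cls_of x)) with (setC (box Ri b)); auto.
      apply set_ext. intros x. unfold setC. rewrite rho_set_of; auto. tauto.
  - apply FIP_preimage; auto. intros C. destruct (cls_rep C) as [x ->]. eauto.
  - exists (cls_of x). intros c Fc. apply (Hx (fun x => c (cls_of x))). eauto.
Qed.

(* le-refinement of the class frame is tightness of Ri. *)
Lemma rho_le_refined C D : ~ rho_le C D -> exists A, rho_P A /\ A C /\ ~ A D.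
Proof.
  destruct (cls_rep C) as [x ->], (cls_rep D) as [y ->].
  rewrite rho_le_of; auto. intros Hn.
  assert (Hsep : exists a, P a /\ box Ri a x /\ ~ a y).
  { apply NNPP. intros H. apply Hn, Ri_tight. intros a Pa Ha.
    apply NNPP. intros nay. apply H. eauto. }
  destruct Hsep as [a [Pa [Hax nay]]].
  exists (rho_set a). split; [exists a; auto|].
  rewrite !rho_set_of by auto. split; [exact Hax|]. intros Hay. apply nay, Hay, Ri_refl.
Qed.

Lemma Rmstar_tight x z :
  (forall e, P e -> box Ri (box Rm e) x -> e z) -> Rmstar x z.
Proof.
  intros H.
  pose (G := fun c => exists a e, P a /\ P e /\ box Ri a x /\ ~ e z /\
                                  c = setI a (setC (box Rm e))).
  destruct (directed_compact P P_compact G) as [w Hw].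
  - intros c [a [e [Pa [Pe [_ [_ ->]]]]]]. auto.
  - exists (setI (@fullset X) (setC (box Rm (@emptyset X)))).
    exists (@fullset X), (@emptyset X). repeat split; auto.
  - intros c d [a [e [Pa [Pe [Ha [He ->]]]]]] [a' [e' [Pa' [Pe' [Ha' [He' ->]]]]]].
    exists (setI (setI a a') (setC (box Rm (setU e e')))). split.
    + exists (setI a a'), (setU e e').
      split; [auto|split; [auto|split; [|split; [|reflexivity]]]].
      * rewrite box_setI. split; auto.
      * intros [Hez|Hez]; auto.
    + intros y [[ay a'y] Hy].
      split; split; auto; intros Hb; apply Hy; eapply box_mono; eauto;
        intros v Hv; unfold setU; auto.
  - intros c [a [e [Pa [Pe [Ha [He ->]]]]]]. apply NNPP. intros Hne.
    apply He, H; auto. eapply box_mono; eauto. intros y ay.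
    apply NNPP. intros Hy. apply Hne. exists y. split; auto.
  - exists w. split.
    + apply Ri_tight. intros a Pa Ha.
      assert (Ga : G (setI a (setC (box Rm (@emptyset X)))))
        by (exists a, (@emptyset X); repeat split; auto).
      exact (proj1 (Hw _ Ga)).
    + apply Rm_tight. intros e Pe He. apply NNPP. intros nez.
      assert (Ge : G (setI (@fullset X) (setC (box Rm e))))
        by (exists (@fullset X), e; repeat split; auto).
      exact (proj2 (Hw _ Ge) He).
Qed.

Lemma Rmstar_separation x y :
  (forall y', simR X Ri y' y -> ~ Rmstar x y') ->
  exists a b, P a /\ P b /\ box Ri a y /\ ~ box Ri b y /\
              rimp Rmstar (box Ri a) (box Ri b) x.
Proof.
  intros Hn. apply NNPP. intros Hno.
  pose (G := fun c => exists d a b, P d /\ P a /\ P b /\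
               (forall z, Rmstar x z -> d z) /\ box Ri a y /\ ~ box Ri b y /\
               c = setI d (setI (box Ri a) (setC (box Ri b)))).
  destruct (directed_compact P P_compact G) as [z Hz].
  - intros c [d [a [b [Pd [Pa [Pb [_ [_ [_ ->]]]]]]]]]. auto.
  - exists (setI (@fullset X) (setI (box Ri (@fullset X)) (setC (box Ri (@emptyset X))))).
    exists (@fullset X), (@fullset X), (@emptyset X). repeat split; auto.
    intros Hb. apply (Hb y), Ri_refl.
  - intros c c' [d [a [b [Pd [Pa [Pb [Hd [Ha [Hb ->]]]]]]]]]
      [d' [a' [b' [Pd' [Pa' [Pb' [Hd' [Ha' [Hb' ->]]]]]]]]].
    exists (setI (setI d d') (setI (box Ri (setI a a'))
                   (setC (box Ri (setU (box Ri b) (box Ri b')))))).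
    rewrite box_setU_box, box_setI by auto. split.
    + exists (setI d d'), (setI a a'), (setU (box Ri b) (box Ri b')).
      rewrite box_setU_box, box_setI by auto.
      repeat split; auto; intros [Hby|Hby]; auto.
    + intros v [[dv d'v] [[av a'v] Hv]].
      repeat split; auto; intros Hbv; apply Hv; unfold setU; auto.
  - intros c [d [a [b [Pd [Pa [Pb [Hd [Ha [Hb ->]]]]]]]]]. apply NNPP. intros Hne.
    apply Hno. exists a, b. repeat split; auto. intros v Hxv Hav.
    apply NNPP. intros Hbv. apply Hne. exists v. repeat split; auto.
  - apply (Hn z).
    + split.
      * apply Ri_tight. intros b Pb Hb. apply NNPP. intros nby.
        assert (Gb : G (setI (@fullset X) (setI (box Ri (@fullset X)) (setC (box Ri b)))))
          by (exists (@fullset X), (@fullset X), b; repeat split; auto;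
              intros Hb'; apply nby, Hb', Ri_refl).
        exact (proj2 (proj2 (Hz _ Gb)) Hb).
      * apply Ri_tight. intros a Pa Ha.
        assert (Ga : G (setI (@fullset X) (setI (box Ri a) (setC (box Ri (@emptyset X))))))
          by (exists (@fullset X), a, (@emptyset X); repeat split; auto;
              intros Hb; apply (Hb y), Ri_refl).
        exact (proj1 (proj2 (Hz _ Ga)) z (Ri_refl z)).
    + apply Rmstar_tight. intros e Pe He.
      assert (Ge : G (setI e (setI (box Ri (@fullset X)) (setC (box Ri (@emptyset X))))))
        by (exists e, (@fullset X), (@emptyset X); repeat split; auto;
            [intros v Hxv; apply box_Rmstar in He; apply He, Hxv
            |intros Hb; apply (Hb y), Ri_refl]).
      exact (proj1 (Hz _ Ge)).
Qed.

Lemma rho_sq_refined C D : ~ rho_sq C D ->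
  exists A B, rho_P A /\ rho_P B /\ rimp rho_sq A B C /\ A D /\ ~ B D.
Proof.
  destruct (cls_rep C) as [x ->], (cls_rep D) as [y ->]. intros Hn.
  destruct (@Rmstar_separation x y) as [a [b [Pa [Pb [Ha [Hb Hab]]]]]].
  { intros y' Hy' Hxy'. apply Hn. exists x, y. repeat split. exists y'. auto. }
  exists (rho_set a), (rho_set b). split; [exists a; auto|split; [exists b; auto|]].
  rewrite rho_sq_rimp, !rho_set_of by auto. auto.
Qed.
End Rho.

Lemma rho_descriptive (X : Type) (Ri Rm : X -> X -> Prop) (P : (X -> Prop) -> Prop) :
  descriptive_S4K Ri Rm P ->
  descriptive_mframe (rho_le X Ri) (rho_sq X Ri Rm) (rho_P X Ri P).
Proof.
  intros [[Hr [Ht [[PF [PE [PC [PI PU]]]] [PBi PBm]]]] [_ [Ti [Tm HC]]]].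
  split; [|split; [|split]].
  - eapply rho_general; eauto.
  - eapply rho_compact; eauto.
  - eapply rho_le_refined; eauto.
  - eapply rho_sq_refined; eauto.
Qed.

Theorem proposition4p10 :
  (forall (X : Type) (le sq : X -> X -> Prop) (P : (X -> Prop) -> Prop),
     descriptive_mframe le sq P ->
     descriptive_S4K le sq (gen_BA P)) /\
  (forall (X : Type) (Ri Rm : X -> X -> Prop) (P : (X -> Prop) -> Prop),
     descriptive_S4K Ri Rm P ->
     descriptive_mframe (rho_le X Ri) (rho_sq X Ri Rm) (rho_P X Ri P)).
Proof.
  split.
  - exact sigma_descriptive.
  - exact rho_descriptive.
Qed.
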